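(* Let $\mathfrak I_M=\{\langle v,v\rangle\}\cup\{\langle M^kv,M^kv\rangle:1\le k<d\}$, where $\langle a,b\rangle=\sum_ia_ib_i$. Then $\mathfrak I_M$ generates both the field $\mathbb C(\mathbb C^d\oplus\mathfrak{so}(d,\mathbb C))^{O_d(\mathbb C)}$ and the field $\mathbb R(\mathbb R^d\oplus\mathfrak{so}(d,\mathbb R))^{O_d(\mathbb R)}$, and separates orbits on $\mathbb C^d\oplus\mathfrak{so}(d,\mathbb C)$ (for $O_d(\mathbb C)$) and on $\mathbb R^d\oplus\mathfrak{so}(d,\mathbb R)$ (for $O_d(\mathbb R)$).
   Context: Fix $d\ge2$. Elements of $\mathbb K^d\oplus\mathfrak{so}(d,\mathbb K)$ ($\mathbb K=\mathbb R$ or $\mathbb C$) are pairs $(v,M)$, $v\in\mathbb K^d$, $M$ a skew-symmetric $d\times d$ matrix over $\mathbb K$; $O_d(\mathbb K)=\{A\in\mathbb K^{d\times d}:AA^\top=I\}$ acts by $A\cdot(v,M)=(Av,AMA^\top)$. $\mathbb K(X)^G$ denotes the field of $G$-invariant rational functions on $X$ with coefficients in $\mathbb K$; ''generates'' means generates as a field over $\mathbb K$. A set of invariants separates orbits if there is a non-empty Zariski-open subset on which two points lie in the same orbit if and only if all invariants in the set take equal values on them. *)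

From HB Require Import structures.
From mathcomp Require Import all_boot all_order all_algebra.
From mathcomp Require Import mpoly.
From mathcomp Require Import complex.
From mathcomp Require Import reals.

Set Implicit Arguments.
Unset Strict Implicit.
Unset Printing Implicit Defensive.

Import Order.TTheory GRing.Theory Num.Theory.
Local Open Scope ring_scope.

Section Defs.
Variables (K : fieldType) (d : nat).

(* points (v, M) of K^d (+) gl(d,K); the space K^d (+) so(d,K) is cut out
   by [inV] *)
Definition pt := ('cV[K]_d * 'M[K]_d)%type.

Definition inV (x : pt) : Prop := x.2^T = - x.2.

Definition orthogonal (A : 'M[K]_d) : Prop := A *m A^T = 1%:M.

Definition act (A : 'M[K]_d) (x : pt) : pt := (A *m x.1, A *m x.2 *m A^T).

Definition coords (x : pt) : 'I_(d + d * d) -> K :=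
  fun i => row_mx x.1^T (mxvec x.2) 0 i.

(* polynomial functions on K^d (+) so(d,K) are the restrictions of
   polynomials in the coordinates of K^d (+) gl(d,K) *)
Definition pfun (p : {mpoly K[d + d * d]}) (x : pt) : K := p.@[coords x].

(* a rational function is represented by p / q, with q not identically zero
   on the space; two representatives p/q, p'/q' are equal iff p q' = p' q
   on the space *)
Definition nonzero_on_V (q : {mpoly K[d + d * d]}) : Prop :=
  exists x, inV x /\ pfun q x != 0.

Definition invariant_rat (p q : {mpoly K[d + d * d]}) : Prop :=
  forall A, orthogonal A -> forall x, inV x ->
    pfun p (act A x) * pfun q x = pfun p x * pfun q (act A x).

Definition dotv (a b : 'cV[K]_d) : K := \sum_(i < d) a i 0 * b i 0.

Definition Mpowv (k : nat) (x : pt) : 'cV[K]_d := iter k (mulmx x.2) x.1.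

Definition gen (k : 'I_d) (x : pt) : K := dotv (Mpowv k x) (Mpowv k x).

Definition genv (x : pt) : 'I_d -> K := fun k => gen k x.

Definition generates_invariant_field : Prop :=
  (* each element of I_M is a (polynomial, hence rational) function *)
  (forall k : 'I_d, exists p : {mpoly K[d + d * d]},
      forall x, inV x -> pfun p x = gen k x) /\
  (forall k : 'I_d, forall A, orthogonal A -> forall x, inV x ->
      gen k (act A x) = gen k x) /\
  (forall p q : {mpoly K[d + d * d]}, nonzero_on_V q -> invariant_rat p q ->
     exists a b : {mpoly K[d]},
       (exists x, inV x /\ b.@[genv x] != 0) /\
       (forall x, inV x -> pfun p x * b.@[genv x] = pfun q x * a.@[genv x])).

(* Zariski-open subsets of K^d (+) so(d,K): complements of the common zero
   set of a family S of polynomial functions *)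
Definition zariski_open_set (S : pred {mpoly K[d + d * d]}) (x : pt) : Prop :=
  inV x /\ exists p, S p /\ pfun p x != 0.

Definition separates_orbits : Prop :=
  exists S : pred {mpoly K[d + d * d]},
    (exists x, zariski_open_set S x) /\
    forall x y, zariski_open_set S x -> zariski_open_set S y ->
      ((exists A, orthogonal A /\ act A x = y) <-> (forall k, gen k x = gen k y)).

End Defs.

From Pilot Require Import Defs.
From HB Require Import structures.
From mathcomp Require Import all_boot all_order all_algebra.
From mathcomp Require Import mpoly.
From mathcomp Require Import complex.
From mathcomp Require Import reals.
From mathcomp Require Import zify ring.

Set Implicit Arguments.
Unset Strict Implicit.
Unset Printing Implicit Defensive.

Import Order.TTheory GRing.Theory Num.Theory.
Local Open Scope ring_scope.

(* For skew M, <M^j v, M^l v> = (-1)^j <v, M^(j+l) v>, which vanishes when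
   j + l is odd; hence the Gram matrices, with respect to 1 and to M, of the
   Krylov basis v, Mv, ..., M^(d-1) v are determined by the invariants
   <M^k v, M^k v>.  Where the Krylov matrix is invertible, equal Gram data
   produce an orthogonal matrix carrying one point to the other: this separates
   orbits.  For generation, a point whose leading Gram minors D_k do not vanish
   is orthogonally equivalent to a normal form: v = c_0 e_0 and M tridiagonal
   with subdiagonal c_1, ..., c_(d-1), where c_j^2 = D_(j+1) D_(j-1) / D_j^2 is
   rational in the invariants (square roots exist over C, and over R because
   the D_k are positive).  An invariant p / q takes the same value at the normal
   forms of all 2^d sign choices of c, so averaging p q^(k-1) and q^k over the
   signs gives even polynomials in c, i.e. polynomials in the invariants; a
   power-sum argument picks k so that the averaged denominator is nonzero. *)

Section OrthogonalAction.
Variables (K : fieldType) (d : nat).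
Implicit Types (x : pt K d) (A B : 'M[K]_d) (a b : 'cV[K]_d).

Lemma orthogonal_trC A : Defs.orthogonal A -> A^T *m A = 1%:M.
Proof. exact: mulmx1C. Qed.

Lemma orthogonal_tr A : Defs.orthogonal A -> Defs.orthogonal A^T.
Proof. by move=> oA; rewrite /Defs.orthogonal trmxK orthogonal_trC. Qed.

Lemma orthogonal_mul A B : Defs.orthogonal A -> Defs.orthogonal B -> Defs.orthogonal (A *m B).
Proof.
by move=> oA oB; rewrite /Defs.orthogonal trmx_mul mulmxA -(mulmxA A) oB mulmx1.
Qed.

Lemma act_mul A B x : act A (act B x) = act (A *m B) x.
Proof. by rewrite /act /= trmx_mul !mulmxA. Qed.

Lemma act1 x : act 1%:M x = x.
Proof. by case: x => v M; rewrite /act /= trmx1 !mul1mx mulmx1. Qed.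

Lemma MpowvS k x : Mpowv k.+1 x = x.2 *m Mpowv k x.
Proof. by []. Qed.

Lemma Mpowv_act A x k : Defs.orthogonal A -> Mpowv k (act A x) = A *m Mpowv k x.
Proof.
move=> oA; elim: k => [|k IHk] //; rewrite !MpowvS IHk /=.
by rewrite -!mulmxA (mulmxA A^T) orthogonal_trC // mul1mx.
Qed.

Lemma dotvE a b : dotv a b = (a^T *m b) 0 0.
Proof. by rewrite /dotv mxE; apply: eq_bigr => i _; rewrite mxE. Qed.

Lemma dotvC a b : dotv a b = dotv b a.
Proof. by apply: eq_bigr => i _; rewrite mulrC. Qed.

Lemma dotv_mulmxl B a b : dotv (B *m a) b = dotv a (B^T *m b).
Proof. by rewrite !dotvE trmx_mul mulmxA. Qed.

Lemma dotv_orthogonal A a b : Defs.orthogonal A -> dotv (A *m a) (A *m b) = dotv a b.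
Proof. by move=> oA; rewrite dotv_mulmxl mulmxA orthogonal_trC // mul1mx. Qed.

Lemma gen_act (k : 'I_d) A x : Defs.orthogonal A -> gen k (act A x) = gen k x.
Proof. by move=> oA; rewrite /gen Mpowv_act // dotv_orthogonal. Qed.

Lemma dotv_MpowvS x j l : inV x ->
  dotv (Mpowv j.+1 x) (Mpowv l x) = - dotv (Mpowv j x) (Mpowv l.+1 x).
Proof.
move=> skM; rewrite MpowvS dotv_mulmxl skM mulNmx /dotv -sumrN.
by apply: eq_bigr => i _; rewrite mxE mulrN.
Qed.

Lemma dotv_Mpowv x j l : inV x ->
  dotv (Mpowv j x) (Mpowv l x) = (-1) ^+ j * dotv x.1 (Mpowv (j + l) x).
Proof.
move=> skM; elim: j l => [|j IHj] l; first by rewrite mul1r.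
by rewrite dotv_MpowvS // IHj addSnnS exprS mulN1r mulNr.
Qed.

End OrthogonalAction.

Section GramData.
Variables (K : numFieldType) (d : nat).
Implicit Types (x : pt K d).

Definition Mpowv_norm x m := dotv (Mpowv m x) (Mpowv m x).

(* For skew M the Gram entry <M^j v, M^l v> depends only on the norms of the
   M^m v: it vanishes for j + l odd and is +-<M^m v, M^m v> for j + l = 2m. *)
Definition gram_of (g : nat -> K) (j l : nat) : K :=
  if odd (j + l) then 0 else (-1) ^+ (j + (j + l)./2) * g (j + l)./2.

Lemma dotv_Mpowv_odd x m : inV x -> dotv x.1 (Mpowv m.*2.+1 x) = 0.
Proof.
move=> skM; have := dotv_Mpowv m m.+1 skM.
rewrite dotvC dotv_Mpowv // addSn addnS addnn exprS mulN1r mulNr => /eqP.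
rewrite eq_sym -addr_eq0 -mulr2n -mulr_natl mulf_eq0 pnatr_eq0 mulf_eq0 signr_eq0.
by move/eqP.
Qed.

Lemma dotv_Mpowv_gram x j l : inV x ->
  dotv (Mpowv j x) (Mpowv l x) = gram_of (Mpowv_norm x) j l.
Proof.
move=> skM; rewrite dotv_Mpowv // /gram_of; case: ifP => odd_jl.
  by rewrite -[(j + l)%N]odd_double_half odd_jl dotv_Mpowv_odd // mulr0.
rewrite -[in Mpowv (j + l)](odd_double_half (j + l)) odd_jl add0n.
rewrite /Mpowv_norm dotv_Mpowv // addnn mulrA -exprD -addnA addnn exprD.
by rewrite -[(-1) ^+ _.*2]signr_odd odd_double mulr1.
Qed.

End GramData.

Lemma orthogonal_congr_gram (K : fieldType) m (B B' M M' : 'M[K]_m) :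
  B \in unitmx -> B^T *m B = B'^T *m B' -> B^T *m (M *m B) = B'^T *m (M' *m B') ->
  exists A, [/\ Defs.orthogonal A, B' = A *m B & M' = A *m M *m A^T].
Proof.
move=> uB; have [A ->] : exists A, B' = A *m B.
  by exists (B' *m invmx B); rewrite mulmxKV.
move=> gramB gramMB; have uBt : B^T \in unitmx by rewrite unitmx_tr.
have AtA : A^T *m A = 1%:M.
  apply: (can_inj (mulKmx uBt)); apply: (can_inj (mulmxK uB)).
  by rewrite mulmx1 gramB trmx_mul !mulmxA.
have oA : Defs.orthogonal A by apply: mulmx1C.
exists A; split => //.
have AtM'A : A^T *m M' *m A = M.
  apply: (can_inj (mulKmx uBt)); apply: (can_inj (mulmxK uB)).
  by rewrite -[RHS]mulmxA gramMB trmx_mul !mulmxA.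
by rewrite -AtM'A !mulmxA oA mul1mx -!mulmxA oA mulmx1.
Qed.

Section KrylovMatrix.
Variables (K : fieldType) (n : nat).
Local Notation d := n.+1.
Implicit Types (x : pt K d).

Definition krylov x : 'M[K]_d := \matrix_(i, k) Mpowv k x i 0.

Lemma krylov_gram x :
  (krylov x)^T *m krylov x = \matrix_(j, k) dotv (Mpowv j x) (Mpowv k x).
Proof. by apply/matrixP => j k; rewrite !mxE; apply: eq_bigr => i _; rewrite !mxE. Qed.

Lemma mulmx_krylov x : x.2 *m krylov x = \matrix_(i, k) Mpowv k.+1 x i 0.
Proof. by apply/matrixP => i k; rewrite !mxE; apply: eq_bigr => r _; rewrite !mxE. Qed.

Lemma krylov_gram_skew x :
  (krylov x)^T *m (x.2 *m krylov x) = \matrix_(j, k) dotv (Mpowv j x) (Mpowv k.+1 x).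
Proof.
rewrite mulmx_krylov; apply/matrixP => j k; rewrite !mxE.
by apply: eq_bigr => i _; rewrite !mxE.
Qed.

Lemma krylov_col0 x : krylov x *m delta_mx 0 0 = x.1.
Proof. by rewrite -colE; apply/matrixP => i j; rewrite !mxE ord1. Qed.

End KrylovMatrix.

Section KrylovSeparation.
Variables (K : numFieldType) (n : nat).
Local Notation d := n.+1.
Implicit Types (x y : pt K d).

Definition gen_at (g : 'I_d -> K) (m : nat) : K := g (inord m).

Lemma Mpowv_norm_gen x m : (m < d)%N -> Mpowv_norm x m = gen_at (genv x) m.
Proof. by move=> lt_m_d; rewrite /gen_at /genv /gen inordK. Qed.

Lemma dotv_Mpowv_genv x y j l : inV x -> inV y -> genv x =1 genv y ->
  (j + l <= n.*2.+1)%N -> dotv (Mpowv j x) (Mpowv l x) = dotv (Mpowv j y) (Mpowv l y).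
Proof.
move=> skx sky genxy le_jl; rewrite !dotv_Mpowv_gram // /gram_of; case: ifP => // odd_jl.
have lt_half : ((j + l)./2 < d)%N.
  by move: le_jl; rewrite -[(j + l)%N]odd_double_half odd_jl add0n; lia.
by rewrite !Mpowv_norm_gen // /gen_at genxy.
Qed.

(* The Gram data of the Krylov basis (with and without M) only involves
   <M^j v, M^l v> with j + l <= 2d - 1, which the invariants determine. *)
Lemma orbit_of_genv_eq x y : inV x -> inV y -> genv x =1 genv y ->
  krylov x \in unitmx -> exists A, Defs.orthogonal A /\ act A x = y.
Proof.
move=> skx sky genxy ux.
have [||A [oA krylovE ME]] := orthogonal_congr_gram (B' := krylov y) (M := x.2) (M' := y.2) ux.
- rewrite !krylov_gram; apply/matrixP => j k; rewrite !mxE.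
  by apply: dotv_Mpowv_genv => //; have := ltn_ord j; have := ltn_ord k; lia.
- rewrite !krylov_gram_skew; apply/matrixP => j k; rewrite !mxE.
  by apply: dotv_Mpowv_genv => //; have := ltn_ord j; have := ltn_ord k; lia.
exists A; split => //; rewrite [y]surjective_pairing /act -ME.
by rewrite -(krylov_col0 x) -(krylov_col0 y) krylovE mulmxA.
Qed.

End KrylovSeparation.

Section PolynomialInvariants.
Variables (K : fieldType) (n : nat).
Local Notation d := n.+1.
Local Notation PK := {mpoly K[d + d * d]}.
Implicit Types (x : pt K d).

Definition Xvec : 'cV[PK]_d := \col_i 'X_(lshift (d * d) i).
Definition Xmat : 'M[PK]_d := \matrix_(a, b) 'X_(rshift d (mxvec_index a b)).
Definition XMpowv (k : nat) : 'cV[PK]_d := iter k (mulmx Xmat) Xvec.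

Lemma map_XMpowv x k : map_mx (meval (coords x)) (XMpowv k) = Mpowv k x.
Proof.
elim: k => [|k IHk].
  by apply/matrixP => i j; rewrite !mxE mevalXU /coords row_mxEl mxE ord1.
rewrite /XMpowv iterS map_mxM -/(XMpowv k) IHk; congr (_ *m _).
by apply/matrixP => i j; rewrite !mxE /= mevalXU /coords row_mxEr mxvecE.
Qed.

Definition genP (k : 'I_d) : PK := \sum_(i < d) XMpowv k i 0 * XMpowv k i 0.

Lemma pfun_genP k x : pfun (genP k) x = gen k x.
Proof.
rewrite /pfun /genP /gen /dotv rmorph_sum; apply: eq_bigr => i _.
by rewrite rmorphM /= -(map_XMpowv x k) mxE.
Qed.

Definition krylovX : 'M[PK]_d := \matrix_(i, k) XMpowv k i 0.

Lemma pfun_det_krylovX x : pfun (\det krylovX) x = \det (krylov x).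
Proof.
rewrite /pfun -det_map_mx; congr (\det _); apply/matrixP => i k.
by rewrite !mxE -map_XMpowv mxE.
Qed.

Definition genT : d.-tuple PK := [tuple genP i | i < d].

Lemma pfun_comp_genT (b : {mpoly K[d]}) x : pfun (b \mPo genT) x = b.@[genv x].
Proof.
rewrite /pfun comp_mpoly_meval; apply: meval_eq => i.
by rewrite tnth_mktuple; exact: pfun_genP.
Qed.

End PolynomialInvariants.

Section NormalForm.
Variables (K : fieldType) (n : nat).
Local Notation d := n.+1.
Implicit Types (x : pt K d) (c : 'I_d -> K).

Definition tridiag c : 'M[K]_d := \matrix_(i, j)
  if i == j.+1 :> nat then c i else if j == i.+1 :> nat then - c j else 0.

Definition nf c : pt K d := (\col_i (if i == ord0 then c ord0 else 0), tridiag c).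

Lemma inV_nf c : inV (nf c).
Proof.
apply/matrixP => i j; rewrite !mxE.
have [ij|ij] := eqVneq (j : nat) i.+1; have [ji|ji] := eqVneq (i : nat) j.+1 => //=.
- by lia.
- by rewrite opprK.
- by rewrite oppr0.
Qed.

Definition nf_coef c (k : nat) : K := \prod_(i < k.+1) c (inord i).

Lemma Mpowv_nf_lt c k (i : 'I_d) : (k < i)%N -> Mpowv k (nf c) i 0 = 0.
Proof.
elim: k i => [|k IHk] i lt_ki.
  by rewrite /= mxE; case: ifP => // /eqP i0; move: lt_ki; rewrite i0.
rewrite MpowvS mxE; apply: big1 => j _; rewrite mxE.
case: ifP => [/eqP ij|_]; first by rewrite IHk ?mulr0 //; lia.
case: ifP => [/eqP ji|_]; first by rewrite IHk ?mulr0 //; lia.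
by rewrite mul0r.
Qed.

Lemma Mpowv_nf_diag c k (lt_kd : (k < d)%N) :
  Mpowv k (nf c) (Ordinal lt_kd) 0 = nf_coef c k.
Proof.
elim: k lt_kd => [|k IHk] lt_kd.
  rewrite /nf_coef big_ord1 /= mxE.
  have -> : Ordinal lt_kd = ord0 by apply: val_inj.
  by rewrite eqxx; congr c; apply: val_inj; rewrite /= inordK.
have lt_k : (k < d)%N by lia.
rewrite MpowvS mxE (bigD1 (Ordinal lt_k)) //= big1 ?addr0.
  rewrite mxE /= eqxx IHk mulrC [in RHS]/nf_coef big_ord_recr /=.
  by congr (_ * c _); apply: val_inj; rewrite /= inordK.
move=> j neq_jk; rewrite mxE /=; case: ifP => [/eqP ij|_].
  by case/eqP: neq_jk; apply: val_inj => /=; lia.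
case: ifP => [/eqP ji|_]; first by rewrite Mpowv_nf_lt ?mulr0 //; lia.
by rewrite mul0r.
Qed.

Definition gram_minor x (k : nat) : K :=
  \det (\matrix_(i < k, j < k) dotv (Mpowv i x) (Mpowv j x)).

Lemma gram_minor0 x : gram_minor x 0 = 1.
Proof. exact: det_mx00. Qed.

(* The first k Krylov vectors of a normal form are supported on the first k
   coordinates, where they form a triangular matrix with diagonal nf_coef. *)
Lemma gram_minor_nf c k : (k <= d)%N -> gram_minor (nf c) k = \prod_(j < k) nf_coef c j ^+ 2.
Proof.
move=> le_kd; pose L : 'M[K]_k := \matrix_(r, i) Mpowv i (nf c) (inord r) 0.
have gramL : \matrix_(i < k, j < k) dotv (Mpowv i (nf c)) (Mpowv j (nf c)) = L^T *m L.
  apply/matrixP => i j; rewrite !mxE /dotv.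
  pose f (m : nat) := Mpowv i (nf c) (inord m) 0 * Mpowv j (nf c) (inord m) 0.
  transitivity (\sum_(r < d) f r); first by apply: eq_bigr => r _; rewrite /f inord_val.
  rewrite (bigID (fun r : 'I_d => (r < k)%N)) /= [X in _ + X]big1 ?addr0.
    by rewrite -(big_ord_widen d f le_kd); apply: eq_bigr => r _; rewrite !mxE.
  move=> r; rewrite -leqNgt => le_kr; rewrite /f Mpowv_nf_lt ?mul0r // inordK //.
  by have := ltn_ord i; lia.
have trigL : is_trig_mx L^T.
  apply/forallP => i; apply/forallP => j; apply/implyP => lt_ij.
  by rewrite !mxE Mpowv_nf_lt // inordK //; have := ltn_ord j; lia.
rewrite /gram_minor gramL det_mulmx det_tr -expr2 -det_tr det_trig // -prodrXl.
apply: eq_bigr => i _; rewrite !mxE.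
have lt_id : (i < d)%N by have := ltn_ord i; lia.
have -> : (inord i : 'I_d) = Ordinal lt_id by apply: val_inj; rewrite /= inordK.
by rewrite Mpowv_nf_diag.
Qed.

End NormalForm.

Lemma det_corner_diff (K : comPzRingType) m (A A' : 'M[K]_m.+1) :
  (forall i j, (i != ord_max) || (j != ord_max) -> A i j = A' i j) ->
  \det A - \det A' =
  (A ord_max ord_max - A' ord_max ord_max) * \det (row' ord_max (col' ord_max A)).
Proof.
move=> eqAA'.
have cofE j : cofactor A ord_max j = cofactor A' ord_max j.
  rewrite /cofactor; congr (_ * \det _); apply/matrixP => a b.
  by rewrite !mxE eqAA' // eq_sym neq_lift.
rewrite !(expand_det_row _ ord_max) -sumrB (bigD1 ord_max) //= big1 ?addr0.
  by rewrite -cofE -mulrBl /cofactor addnn -signr_odd odd_double mul1r.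
by move=> j neq_j; rewrite cofE eqAA' ?subrr // neq_j orbT.
Qed.

Section GramMinors.
Variables (K : numFieldType) (n : nat).
Local Notation d := n.+1.
Implicit Types (x : pt K d) (g : 'I_d -> K).

Definition gram_minor_of g (k : nat) : K :=
  \det (\matrix_(i < k, j < k) gram_of (gen_at g) i j).

Lemma gram_minor_of_genv x k : inV x -> (k <= d)%N -> gram_minor_of (genv x) k = gram_minor x k.
Proof.
move=> skx le_kd; congr (\det _); apply/matrixP => i j; rewrite !mxE.
rewrite dotv_Mpowv_gram // /gram_of; case: ifP => // odd_ij.
rewrite Mpowv_norm_gen //; have := ltn_ord i; have := ltn_ord j.
by move: odd_ij; rewrite -[(i + j)%N]odd_double_half; case: odd => //= _; lia.
Qed.

Lemma gram_of_diag (f : nat -> K) m : gram_of f m m = f m.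
Proof.
by rewrite /gram_of addnn odd_double half_double addnn -signr_odd odd_double mul1r.
Qed.

(* Bordering the m x m minor by one row and column introduces the single new
   invariant gen_at g m, in the corner. *)
Lemma gram_minor_of_step g g' m : (m < d)%N ->
  (forall i, (i < m)%N -> gen_at g i = gen_at g' i) -> gram_minor_of g m != 0 ->
  gram_minor_of g m.+1 = gram_minor_of g' m.+1 -> gen_at g m = gen_at g' m.
Proof.
move=> lt_md eq_lt nz_m eq_m1.
pose G (f : 'I_d -> K) := \matrix_(i < m.+1, j < m.+1) gram_of (gen_at f) i j.
have off_corner i j : (i != ord_max) || (j != ord_max) -> G g i j = G g' i j.
  rewrite !mxE /gram_of; case: ifP => // odd_ij; rewrite -!val_eqE /= => ij_max.
  rewrite eq_lt //; have := odd_double_half (i + j); rewrite odd_ij add0n.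
  by have := ltn_ord i; have := ltn_ord j; lia.
have := det_corner_diff off_corner.
have -> : row' ord_max (col' ord_max (G g)) = \matrix_(i < m, j < m) gram_of (gen_at g) i j.
  by apply/matrixP => a b; rewrite !mxE !lift_max.
rewrite -/(gram_minor_of g m) -/(gram_minor_of g m.+1) -/(gram_minor_of g' m.+1).
rewrite eq_m1 subrr !mxE !gram_of_diag => /esym/eqP.
by rewrite mulf_eq0 (negbTE nz_m) orbF subr_eq0 => /eqP.
Qed.

Lemma gram_minor_of_inj g g' :
  (forall k, (k <= d)%N -> gram_minor_of g k = gram_minor_of g' k) ->
  (forall k, (k < d)%N -> gram_minor_of g k != 0) -> g =1 g'.
Proof.
move=> eq_minor nz_minor.
suff eq_lt m : (m <= d)%N -> forall i, (i < m)%N -> gen_at g i = gen_at g' i.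
  by move=> i; have := eq_lt d (leqnn _) i (ltn_ord i); rewrite /gen_at inord_val.
elim: m => [|m IHm] // lt_md i; rewrite ltnS leq_eqVlt => /predU1P [->|];
  last exact: IHm (ltnW lt_md) i.
by apply: gram_minor_of_step => //; [exact: IHm (ltnW lt_md)|exact: nz_minor|exact: eq_minor].
Qed.

End GramMinors.

Section NormalFormOrbit.
Variables (K : numFieldType) (n : nat).
Local Notation d := n.+1.
Implicit Types (x : pt K d) (c g : 'I_d -> K).

(* c_j^2 = D_{j+1} D_{j-1} / D_j^2 for the leading Gram minors D_k; at j = 0
   the index j.-1 = 0 gives D_1 D_0 / D_0^2 = D_1, as wanted. *)
Definition nf_sq g (j : nat) : K :=
  gram_minor_of g j.+1 * gram_minor_of g j.-1 / gram_minor_of g j ^+ 2.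

Definition good x := [forall k : 'I_d, gram_minor x k.+1 != 0].

Lemma good_gram_minor_neq0 x k : good x -> (k <= d)%N -> gram_minor x k != 0.
Proof.
case: k => [|k] /forallP gx le_kd; first by rewrite gram_minor0 oner_eq0.
exact: (gx (Ordinal le_kd)).
Qed.

Lemma gram_minor_krylov x : gram_minor x d = \det (krylov x) ^+ 2.
Proof. by rewrite /gram_minor -krylov_gram det_mulmx det_tr expr2. Qed.

Lemma good_krylov_unit x : good x -> krylov x \in unitmx.
Proof.
move=> gx; have := good_gram_minor_neq0 gx (leqnn d).
by rewrite gram_minor_krylov unitmxE unitfE expf_eq0.
Qed.

Section SquareRoots.
Variables (x : pt K d) (c : 'I_d -> K).
Hypotheses (skx : inV x) (gx : good x) (c_sq : forall j : 'I_d, c j ^+ 2 = nf_sq (genv x) j).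

Lemma nf_coef_sq j : (j < d)%N -> nf_coef c j ^+ 2 = gram_minor x j.+1 / gram_minor x j.
Proof.
have minorE k : (k <= d)%N -> gram_minor_of (genv x) k = gram_minor x k.
  exact: gram_minor_of_genv.
elim: j => [|j IHj] lt_jd.
  by rewrite /nf_coef big_ord1 c_sq /nf_sq inordK // !minorE // gram_minor0 expr1n !mulr1 divr1.
rewrite /nf_coef big_ord_recr /= -/(nf_coef c j) exprMn IHj; last by lia.
rewrite c_sq /nf_sq inordK // !minorE; try lia.
have nz_j1 := good_gram_minor_neq0 gx (ltnW lt_jd).
have nz_j := good_gram_minor_neq0 gx (ltnW (ltnW lt_jd)).
by field; rewrite nz_j nz_j1.
Qed.

Lemma gram_minor_nf_sq k : (k <= d)%N -> gram_minor (nf c) k = gram_minor x k.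
Proof.
move=> le_kd; rewrite gram_minor_nf //; elim: k le_kd => [|k IHk] le_kd.
  by rewrite big_ord0 gram_minor0.
rewrite big_ord_recr /= IHk; last by lia.
by rewrite nf_coef_sq // mulrC -mulrA mulVf ?mulr1 // good_gram_minor_neq0 //; lia.
Qed.

(* The normal form has the same leading Gram minors as x, hence the same
   invariants, and both have invertible Krylov matrices. *)
Lemma orbit_nf : exists A, Defs.orthogonal A /\ act A x = nf c.
Proof.
have genv_nf : genv x =1 genv (nf c).
  apply: gram_minor_of_inj => k le_kd.
    by rewrite gram_minor_of_genv // (gram_minor_of_genv (inV_nf c)) // gram_minor_nf_sq.
  by rewrite gram_minor_of_genv ?good_gram_minor_neq0 // ltnW.
exact: orbit_of_genv_eq (inV_nf c) genv_nf (good_krylov_unit gx).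
Qed.

End SquareRoots.

Lemma good_nf1 : good (nf (fun=> 1)).
Proof.
apply/forallP => k; rewrite gram_minor_nf // big1 ?oner_eq0 // => j _.
by rewrite /nf_coef big1 ?expr1n.
Qed.

End NormalFormOrbit.

Lemma invmx_corner (K : fieldType) m (G : 'M[K]_m.+1) : G \in unitmx ->
  invmx G ord_max ord_max = \det (row' ord_max (col' ord_max G)) / \det G.
Proof.
move=> uG; rewrite /invmx uG !mxE /cofactor addnn -signr_odd odd_double mul1r mulrC.
by congr (_ / _); congr (\det _); apply/matrixP => i j; rewrite !mxE.
Qed.

Lemma invmx_gram_diag_ge0 (R : realFieldType) m k (L : 'M[R]_(m, k)) (i : 'I_k) :
  L^T *m L \in unitmx -> 0 <= invmx (L^T *m L) i i.
Proof.
set G := L^T *m L => uG; pose u : 'cV_k := invmx G *m delta_mx i 0.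
have -> : invmx G i i = ((L *m u)^T *m (L *m u)) 0 0.
  have symG : G^T = G by rewrite trmx_mul trmxK.
  rewrite trmx_mul /u trmx_mul trmx_inv symG !mulmxA -(mulmxA _ L^T) -/G.
  by rewrite -(mulmxA _ (invmx G) G) mulVmx // mulmx1 trmx_delta -rowE -colE !mxE.
rewrite mxE; apply: sumr_ge0 => r _; rewrite mxE -expr2; exact: sqr_ge0.
Qed.

Section Positivity.
Variables (R : realFieldType) (n : nat).
Local Notation d := n.+1.
Implicit Types (x : pt R d).

(* The ratio D_k / D_{k+1} of consecutive Gram minors is a diagonal entry of
   the inverse of a Gram matrix, hence nonnegative. *)
Lemma gram_minor_gt0 x k : good x -> (k <= d)%N -> 0 < gram_minor x k.
Proof.
move=> gx; elim: k => [|k IHk] le_kd; first by rewrite gram_minor0 ltr01.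
pose L : 'M[R]_(d, k.+1) := \matrix_(r, i) Mpowv i x r 0.
have gramL : \matrix_(i < k.+1, j < k.+1) dotv (Mpowv i x) (Mpowv j x) = L^T *m L.
  by apply/matrixP => i j; rewrite !mxE; apply: eq_bigr => r _; rewrite !mxE.
have nz_k1 := good_gram_minor_neq0 gx le_kd.
have uG : L^T *m L \in unitmx by rewrite unitmxE unitfE -gramL.
have := invmx_gram_diag_ge0 ord_max uG; rewrite invmx_corner // -gramL.
have -> : row' ord_max (col' ord_max
    (\matrix_(i < k.+1, j < k.+1) dotv (Mpowv i x) (Mpowv j x))) =
  \matrix_(i < k, j < k) dotv (Mpowv i x) (Mpowv j x).
  by apply/matrixP => i j; rewrite !mxE !lift_max.
rewrite -/(gram_minor x k) -/(gram_minor x k.+1) => ratio_ge0.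
have gt0_k := IHk (ltnW le_kd).
have : 0 < gram_minor x k / gram_minor x k.+1.
  by rewrite lt0r ratio_ge0 andbT mulf_neq0 ?invr_eq0 // lt0r_neq0.
by rewrite pmulr_rgt0 // invr_gt0.
Qed.

Lemma nf_sq_gt0 x j : inV x -> good x -> (j < d)%N -> 0 < nf_sq (genv x) j.
Proof.
move=> skx gx lt_jd; rewrite /nf_sq !gram_minor_of_genv //; try lia.
by rewrite divr_gt0 ?mulr_gt0 ?exprn_gt0 // gram_minor_gt0 //; lia.
Qed.

End Positivity.

Section SignAverage.
Variables (K : numFieldType) (d d' : nat).
Implicit Types (F : {mpoly K[d]}) (c : 'I_d -> K) (δ : {ffun 'I_d -> bool}).

Definition flip_signs δ c : 'I_d -> K := fun j => if δ j then - c j else c j.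

Definition all_even (m : 'X_{1..d}) : bool := [forall j, ~~ odd (m j)].

Lemma sum_flip_signs F c : \sum_δ F.@[flip_signs δ c] =
  \sum_(m <- msupp F) F@_m * (if all_even m then 2 ^+ d * \prod_j c j ^+ m j else 0).
Proof.
under eq_bigr => δ _ do rewrite mevalE.
rewrite exchange_big /=; apply: eq_bigr => m _; rewrite -mulr_sumr; congr (_ * _).
rewrite /flip_signs.
rewrite -(bigA_distr_bigA (fun j (b : bool) => (if b then - c j else c j) ^+ m j)) /=.
under eq_bigr => j _ do rewrite big_bool /= exprNn.
case: ifP => [/forallP even_m|/negbT].
  rewrite -[d in 2 ^+ d]card_ord -prodr_const -big_split /=; apply: eq_bigr => j _.
  by rewrite -signr_odd (negbTE (even_m j)) mul1r mulr2n mulrDl mul1r.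
rewrite negb_forall => /existsP [j /negPn odd_mj]; apply/eqP/prodf_eq0.
by exists j => //; rewrite -signr_odd odd_mj mulN1r addNr.
Qed.

(* Substitutes c_j^2 = num_j / den_j into the even monomials of F and clears
   denominators by the factor prod_j den_j^N. *)
Definition even_part F (num den : 'I_d -> {mpoly K[d']}) (N : nat) : {mpoly K[d']} :=
  \sum_(m <- msupp F) if all_even m then
    F@_m *: \prod_j (num j ^+ (m j)./2 * den j ^+ (N - (m j)./2)) else 0.

Lemma even_part_eval F num den N (g : 'I_d' -> K) c :
  (msize F <= N)%N -> (forall j, (den j).@[g] != 0) ->
  (forall j, (num j).@[g] = c j ^+ 2 * (den j).@[g]) ->
  (even_part F num den N).@[g] =
  (\prod_j (den j).@[g] ^+ N) / 2 ^+ d * \sum_δ F.@[flip_signs δ c].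
Proof.
move=> le_FN nz_den numE; rewrite sum_flip_signs rmorph_sum mulr_sumr.
apply: eq_big_seq => m m_supp; case: ifP => even_m; last by rewrite raddf0 !mulr0.
rewrite /= mevalZ rmorph_prod mulrCA -mulrA mulKf ?expf_neq0 ?pnatr_eq0 //.
congr (_ * _); rewrite -big_split; apply: eq_bigr => j _.
rewrite rmorphM !rmorphXn /= numE exprMn -exprM.
have le_half : ((m j)./2 <= N)%N.
  by have := msize_mdeg_lt m_supp; rewrite mdegE (bigD1 j) //=; lia.
have -> : (2 * (m j)./2 = m j)%N.
  by have := odd_double_half (m j); move/forallP: even_m => /(_ j) /negbTE ->; rewrite -mul2n.
by rewrite -mulrA -exprD subnKC // mulrC.
Qed.

End SignAverage.

Section PowerSums.
Variable K : numFieldType.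

Lemma exists_nonroot (p : {poly K}) : p != 0 -> exists t, p.[t] != 0.
Proof.
move=> nz_p; pose rs := [seq (i%:R : K) | i <- iota 0 (size p)].
have [all_root|/allPn [t _ ?]] := boolP (all (root p) rs); last by exists t.
have uniq_rs : uniq rs.
  by rewrite map_inj_uniq ?iota_uniq // => a b /eqP; rewrite eqr_nat => /eqP.
by have := max_poly_roots nz_p all_root uniq_rs; rewrite size_map size_iota ltnn.
Qed.

Variables (I : finType) (z : I -> K) (i0 : I).
Hypothesis nz_zi0 : z i0 != 0.

(* The witness is X times the product of the X - z j over the j with
   z j != z i0. *)
Lemma exists_poly_vanishing_off : exists L : {poly K},
  [/\ (size L <= #|I|.+1)%N, L`_0 = 0, L.[z i0] != 0 & forall j, z j != z i0 -> L.[z j] = 0].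
Proof.
pose f i : {poly K} := if i == i0 then 'X else if z i == z i0 then 1 else 'X - (z i)%:P.
exists (\prod_i f i); split.
- apply: leq_trans (size_prod_leq _ _) _.
  have : (\sum_i size (f i) <= \sum_(i : I) 2)%N.
    apply: leq_sum => i _; rewrite /f.
    by case: ifP => _; [rewrite size_polyX|case: ifP => _; rewrite ?size_poly1 ?size_XsubC].
  by rewrite sum_nat_const cardE /=; lia.
- rewrite -horner_coef0 horner_prod; apply/eqP/prodf_eq0.
  by exists i0 => //; rewrite /f eqxx hornerX.
- rewrite horner_prod; apply/prodf_neq0 => i _; rewrite /f.
  case: ifP => _; first by rewrite hornerX.
  case: ifP => zi; first by rewrite hornerC oner_eq0.
  by rewrite hornerXsubC subr_eq0 eq_sym zi.
- move=> j zj; rewrite horner_prod; apply/eqP/prodf_eq0; exists j => //.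
  have [ji0|nj] := eqVneq j i0; first by rewrite ji0 eqxx in zj.
  by rewrite /f (negbTE nj) (negbTE zj) hornerXsubC subrr.
Qed.

(* Otherwise sum_j L(z_j) would vanish for the L above, while it equals
   L(z_i0) times the number of j with z_j = z_i0. *)
Lemma power_sum_neq0 : exists k, (0 < k <= #|I|)%N /\ \sum_i z i ^+ k != 0.
Proof.
have [|/existsP [k]] := boolP [forall k : 'I_#|I|.+1, (0 < k)%N ==> (\sum_i z i ^+ k == 0)];
  last by rewrite negb_imply => /andP [k_gt0 ?]; exists k; rewrite k_gt0 -ltnS ltn_ord.
move=> /forallP sums0; have [L [size_L L0 Lz0 Lz]] := exists_poly_vanishing_off.
have sumL0 : \sum_j L.[z j] = 0.
  under eq_bigr => j _ do rewrite (horner_coef_wide _ size_L).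
  rewrite exchange_big big1 //= => k _; rewrite -mulr_sumr.
  have [->|k_gt0] := posnP k; first by rewrite L0 mul0r.
  by have /implyP/(_ k_gt0)/eqP -> := sums0 k; rewrite mulr0.
have sumLE : \sum_j L.[z j] = L.[z i0] * (\sum_j (z j == z i0 : nat))%:R.
  rewrite natr_sum mulr_sumr; apply: eq_bigr => j _.
  by have [->|/Lz ->] := eqVneq (z j) (z i0); rewrite ?mulr1 ?mulr0.
move/eqP: sumL0; rewrite sumLE mulf_eq0 (negbTE Lz0) pnatr_eq0 (bigD1 i0) //=.
by rewrite eqxx.
Qed.

End PowerSums.

Section Segment.
Variables (K : numFieldType) (d : nat).
Local Notation N := (d + d * d)%N.
Implicit Types (x : pt K d).

Definition segment x1 x2 (t : K) : pt K d :=
  (x1.1 + t *: (x2.1 - x1.1), x1.2 + t *: (x2.2 - x1.2)).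

Lemma inV_segment x1 x2 t : inV x1 -> inV x2 -> inV (segment x1 x2 t).
Proof.
rewrite /inV /= => sk1 sk2; apply/matrixP => i j.
move: (congr1 (fun A : 'M[K]_d => A i j) sk1) (congr1 (fun A : 'M[K]_d => A i j) sk2).
by rewrite !mxE => -> ->; ring.
Qed.

Lemma coords_segment x1 x2 t i :
  coords (segment x1 x2 t) i = coords x1 i + t * (coords x2 i - coords x1 i).
Proof.
rewrite /coords -(splitK i); case: (split i) => [j|k] /=; first by rewrite !row_mxEl !mxE.
by rewrite !row_mxEr; case/mxvec_indexP: k => a b; rewrite !mxvecE !mxE.
Qed.

Lemma horner_mmap (q : {mpoly K[N]}) (v : 'I_N -> {poly K}) (t : K) :
  (mmap polyC v q).[t] = q.@[fun i => (v i).[t]].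
Proof.
rewrite -horner_evalE rmorph_sum mevalE; apply: eq_bigr => m _.
rewrite rmorphM /= horner_evalE hornerC rmorph_prod; congr (_ * _).
by apply: eq_bigr => i _; rewrite rmorphXn /= horner_evalE.
Qed.

(* Restricted to the line through x1 and x2, q h becomes a nonzero univariate
   polynomial, which has a nonroot. *)
Lemma exists_common_nonzero (q h : {mpoly K[N]}) x1 x2 :
  inV x1 -> inV x2 -> pfun q x1 != 0 -> pfun h x2 != 0 ->
  exists x, [/\ inV x, pfun q x != 0 & pfun h x != 0].
Proof.
move=> sk1 sk2 q1 h2.
pose v i : {poly K} := (coords x1 i)%:P + 'X * (coords x2 i - coords x1 i)%:P.
have onSegment p t : (mmap polyC v p).[t] = pfun p (segment x1 x2 t).
  rewrite horner_mmap /pfun; apply: meval_eq => i.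
  by rewrite coords_segment /v hornerD hornerC hornerM hornerX hornerC.
have at0 p : (mmap polyC v p).[0] = pfun p x1.
  by rewrite onSegment /pfun; apply: meval_eq => i; rewrite coords_segment mul0r addr0.
have at1 p : (mmap polyC v p).[1] = pfun p x2.
  by rewrite onSegment /pfun; apply: meval_eq => i; rewrite coords_segment mul1r addrC subrK.
have nz_q : mmap polyC v q != 0 by apply: contraNneq q1 => q0; rewrite -at0 q0 horner0.
have nz_h : mmap polyC v h != 0 by apply: contraNneq h2 => h0; rewrite -at1 h0 horner0.
have [t] := exists_nonroot (mulf_neq0 nz_q nz_h).
rewrite hornerM mulf_eq0 negb_or !onSegment => /andP [qt ht].
by exists (segment x1 x2 t); split => //; apply: inV_segment.
Qed.

End Segment.

Section NormalFormPolynomials.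
Variables (K : fieldType) (n : nat).
Local Notation d := n.+1.
Local Notation N := (d + d * d)%N.
Local Notation PC := {mpoly K[d]}.

(* nf with c replaced by the variables (nf itself requires a field). *)
Definition nf_vecP : 'cV[PC]_d := \col_i (if i == ord0 then 'X_ord0 else 0).
Definition nf_matP : 'M[PC]_d := \matrix_(i, j)
  if i == j.+1 :> nat then 'X_i else if j == i.+1 :> nat then - 'X_j else 0.

Definition mpolyC_mx (T : 'M[K]_d) : 'M[PC]_d := map_mx (fun a => a%:MP) T.

Definition nf_coordsP (T : 'M[K]_d) : N.-tuple PC :=
  [tuple row_mx (mpolyC_mx T *m nf_vecP)^T
           (mxvec (mpolyC_mx T *m nf_matP *m (mpolyC_mx T)^T)) 0 i | i < N].

Lemma meval_nf_coordsP T c i : (tnth (nf_coordsP T) i).@[c] = coords (act T (nf c)) i.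
Proof.
rewrite tnth_mktuple.
have mapT : map_mx (meval c) (mpolyC_mx T) = T by apply/matrixP => a b; rewrite !mxE mevalC.
have mapv : map_mx (meval c) nf_vecP = (nf c).1.
  by apply/matrixP => a b; rewrite !mxE; case: ifP; rewrite ?mevalXU ?raddf0.
have mapM : map_mx (meval c) nf_matP = (nf c).2.
  apply/matrixP => a b; rewrite !mxE; case: ifP; rewrite ?mevalXU //.
  by case: ifP => _; rewrite ?raddfN /= ?mevalXU ?raddf0.
have := congr1 (fun A : 'rV[K]_N => A 0 i)
  (map_row_mx (meval c) (mpolyC_mx T *m nf_vecP)^T
               (mxvec (mpolyC_mx T *m nf_matP *m (mpolyC_mx T)^T))).
rewrite mxE => ->; rewrite /coords /act /=.
by rewrite -map_trmx map_mxvec !map_mxM -map_trmx mapT mapv mapM.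
Qed.

Lemma pfun_act_nf T (p : {mpoly K[N]}) c : pfun p (act T (nf c)) = (p \mPo nf_coordsP T).@[c].
Proof.
by rewrite comp_mpoly_meval /pfun; apply: meval_eq => i; rewrite meval_nf_coordsP.
Qed.

End NormalFormPolynomials.

Section InvariantPolynomials.
Variables (K : numFieldType) (n : nat).
Local Notation d := n.+1.
Local Notation PC := {mpoly K[d]}.
Implicit Types (x : pt K d) (c : 'I_d -> K).

Definition gram_ofP (i j : nat) : PC :=
  if odd (i + j) then 0 else (-1) ^+ (i + (i + j)./2) *: 'X_(inord (i + j)./2).

Definition gram_minorP (k : nat) : PC := \det (\matrix_(i < k, j < k) gram_ofP i j).

Lemma meval_gram_minorP k g : (gram_minorP k).@[g] = gram_minor_of g k.
Proof.
rewrite -det_map_mx; congr (\det _); apply/matrixP => i j.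
rewrite !mxE /gram_ofP /gram_of; case: ifP => _; first by rewrite raddf0.
by rewrite /= mevalZ mevalXU.
Qed.

Definition good_poly : PC := \prod_(k < d) gram_minorP k.+1.

Lemma good_poly_genv x : inV x -> (good_poly.@[genv x] != 0) = good x.
Proof.
move=> skx; rewrite rmorph_prod /=.
under eq_bigr => k _ do rewrite meval_gram_minorP gram_minor_of_genv //.
by apply/prodf_neq0/forallP => [nz_minor k|nz_minor k _]; [exact: nz_minor|exact: nz_minor].
Qed.

Definition nf_numP (j : 'I_d) : PC := gram_minorP j.+1 * gram_minorP j.-1.
Definition nf_denP (j : 'I_d) : PC := gram_minorP j ^+ 2.

Lemma nf_denP_neq0 x j : inV x -> good x -> (nf_denP j).@[genv x] != 0.
Proof.
move=> skx gx; have le_jd := ltnW (ltn_ord j).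
rewrite rmorphXn /= meval_gram_minorP gram_minor_of_genv //.
by rewrite expf_neq0 // good_gram_minor_neq0.
Qed.

Lemma even_part_genv x c F N : inV x -> good x ->
  (forall j : 'I_d, c j ^+ 2 = nf_sq (genv x) j) -> (msize F <= N)%N ->
  (even_part F nf_numP nf_denP N).@[genv x] =
  (\prod_j (nf_denP j).@[genv x] ^+ N) / 2 ^+ d * \sum_δ F.@[flip_signs δ c].
Proof.
move=> skx gx c_sq le_FN; apply: even_part_eval => // j; first exact: nf_denP_neq0.
have := nf_denP_neq0 j skx gx.
rewrite c_sq /nf_sq /nf_denP rmorphXn /= /nf_numP mevalM !meval_gram_minorP => nz_den.
by rewrite divfK.
Qed.

End InvariantPolynomials.

Section Generation.
Variables (K : numFieldType) (n : nat).
Local Notation d := n.+1.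
Local Notation PK := {mpoly K[d + d * d]}.
Implicit Types (x : pt K d) (c : 'I_d -> K) (T : 'M[K]_d).

Hypothesis nf_sq_sqrt :
  forall x, inV x -> good x -> forall j : 'I_d, exists r : K, r ^+ 2 = nf_sq (genv x) j.

Lemma exists_nf_sqrt x : inV x -> good x ->
  exists c, forall j : 'I_d, c j ^+ 2 = nf_sq (genv x) j.
Proof.
move=> skx gx; have sqrt_j (j : 'I_d) : exists r, r ^+ 2 == nf_sq (genv x) j.
  by have [r <-] := nf_sq_sqrt skx gx j; exists r.
by exists (fun j => xchoose (sqrt_j j)) => j; apply/eqP; exact: (xchooseP (sqrt_j j)).
Qed.

Variables (p q : PK).
Hypotheses (q_nz : nonzero_on_V q) (pq_inv : invariant_rat p q).

Lemma exists_good_nonzero : exists x, [/\ inV x, good x & pfun q x != 0].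
Proof.
have [x1 [sk1 q1]] := q_nz.
have good1 : pfun (good_poly K n \mPo genT K n) (nf (fun=> 1)) != 0.
  by rewrite pfun_comp_genT good_poly_genv; [exact: good_nf1|exact: inV_nf].
have [x [skx qx]] := exists_common_nonzero sk1 (inV_nf _) q1 good1.
by rewrite pfun_comp_genT good_poly_genv // => gx; exists x.
Qed.

(* Every sign choice of the square roots c gives a normal form of x, so
   the invariance of p / q compares x with T . nf (flip_signs δ c). *)
Lemma invariant_rat_flip_signs T x c δ : Defs.orthogonal T -> inV x -> good x ->
  (forall j : 'I_d, c j ^+ 2 = nf_sq (genv x) j) ->
  pfun p x * (q \mPo nf_coordsP T).@[flip_signs δ c] =
  pfun q x * (p \mPo nf_coordsP T).@[flip_signs δ c].
Proof.
move=> oT skx gx c_sq.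
have flip_sq j : flip_signs δ c j ^+ 2 = nf_sq (genv x) j.
  by rewrite /flip_signs; case: (δ j); rewrite ?sqrrN c_sq.
have [A [oA Ax]] := orbit_nf skx gx flip_sq.
have := pq_inv (orthogonal_mul oT oA) skx.
by rewrite -act_mul Ax !pfun_act_nf mulrC => ->; rewrite mulrC.
Qed.

Definition sign_avg_num T k N : {mpoly K[d]} := good_poly K n *
  even_part ((p \mPo nf_coordsP T) * (q \mPo nf_coordsP T) ^+ k.-1)
    (@nf_numP K n) (@nf_denP K n) N.

Definition sign_avg_den T k N : {mpoly K[d]} := good_poly K n *
  even_part ((q \mPo nf_coordsP T) ^+ k) (@nf_numP K n) (@nf_denP K n) N.

Lemma sign_avg_genv T k N x : Defs.orthogonal T -> (0 < k)%N ->
  (msize ((p \mPo nf_coordsP T) * (q \mPo nf_coordsP T) ^+ k.-1) <= N)%N ->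
  (msize ((q \mPo nf_coordsP T) ^+ k) <= N)%N -> inV x ->
  pfun p x * (sign_avg_den T k N).@[genv x] = pfun q x * (sign_avg_num T k N).@[genv x].
Proof.
case: k => // k oT _ le_numN le_denN skx; rewrite !mevalM.
have [gx|ngx] := boolP (good x); last first.
  by move: ngx; rewrite -good_poly_genv // negbK => /eqP ->; rewrite !mul0r !mulr0.
have [c c_sq] := exists_nf_sqrt skx gx.
rewrite !(even_part_genv skx gx c_sq) //=.
set E := (good_poly K n).@[genv x]; set C := _ / _.
have sums : pfun p x * \sum_δ ((q \mPo nf_coordsP T) ^+ k.+1).@[flip_signs δ c] =
    pfun q x * \sum_δ ((p \mPo nf_coordsP T) * (q \mPo nf_coordsP T) ^+ k).@[flip_signs δ c].
  rewrite !mulr_sumr; apply: eq_bigr => δ _.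
  rewrite mevalM !rmorphXn /= exprS mulrA invariant_rat_flip_signs //.
  by rewrite mulrA.
transitivity (E * C * (pfun p x * \sum_δ ((q \mPo nf_coordsP T) ^+ k.+1).@[flip_signs δ c])).
  by ring.
by rewrite sums; ring.
Qed.

Lemma invariant_rat_genv : exists a b : {mpoly K[d]},
  (exists x, inV x /\ b.@[genv x] != 0) /\
  (forall x, inV x -> pfun p x * b.@[genv x] = pfun q x * a.@[genv x]).
Proof.
have [xs [skxs gxs qxs]] := exists_good_nonzero.
have [cs cs_sq] := exists_nf_sqrt skxs gxs.
have [A [oA Axs]] := orbit_nf skxs gxs cs_sq.
have xsE : act A^T (nf cs) = xs by rewrite -Axs act_mul orthogonal_trC // act1.
pose z δ := (q \mPo nf_coordsP A^T).@[flip_signs δ cs].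
have z0 : z [ffun => false] != 0.
  rewrite /z (meval_eq _ (v2 := cs)) => [|j]; last by rewrite /flip_signs ffunE.
  by rewrite -pfun_act_nf xsE.
have [k [/andP [k_gt0 _] sum_nz]] := power_sum_neq0 z0.
pose N := maxn (msize ((p \mPo nf_coordsP A^T) * (q \mPo nf_coordsP A^T) ^+ k.-1))
               (msize ((q \mPo nf_coordsP A^T) ^+ k)).
exists (sign_avg_num A^T k N), (sign_avg_den A^T k N); split; last first.
  move=> x; apply: sign_avg_genv => //.
  - exact: orthogonal_tr.
  - exact: leq_maxl.
  - exact: leq_maxr.
exists xs; split => //; rewrite mevalM (even_part_genv skxs gxs cs_sq) ?leq_maxr //.
rewrite !mulf_neq0 ?good_poly_genv ?invr_eq0 ?expf_neq0 ?pnatr_eq0 //.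
  by apply/prodf_neq0 => j _; rewrite expf_neq0 // nf_denP_neq0.
by under eq_bigr => δ _ do rewrite rmorphXn.
Qed.

End Generation.

Theorem generates_invariant_field_nf_sqrt (K : numFieldType) n :
  (forall x : pt K n.+1, inV x -> good x ->
     forall j : 'I_n.+1, exists r : K, r ^+ 2 = nf_sq (genv x) j) ->
  generates_invariant_field K n.+1.
Proof.
move=> nf_sq_sqrt; split; first by move=> k; exists (genP K k) => x _; exact: pfun_genP.
split; first by move=> k A oA x _; exact: gen_act.
by move=> p q; exact: invariant_rat_genv.
Qed.

Theorem separates_orbits_krylov (K : numFieldType) n : separates_orbits K n.+1.
Proof.
have det_krylov_neq0 x : good x -> pfun (\det (krylovX K n)) x != 0.
  by move/good_krylov_unit; rewrite pfun_det_krylovX unitmxE unitfE.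
exists (pred1 (\det (krylovX K n))); split.
  exists (nf (fun=> 1)); split; first exact: inV_nf.
  by exists (\det (krylovX K n)); rewrite /= eqxx det_krylov_neq0 //; exact: good_nf1.
move=> x y [skx [_ [/eqP -> krylov_x]]] [sky _]; split.
  by move=> [A [oA <-]] k; rewrite gen_act.
move=> genxy; apply: orbit_of_genv_eq => //.
by rewrite unitmxE unitfE -pfun_det_krylovX.
Qed.

Theorem proposition3p17 (R : realType) (d : nat) : (2 <= d)%N ->
  generates_invariant_field R[i] d /\ generates_invariant_field R d /\
  separates_orbits R[i] d /\ separates_orbits R d.
Proof.
case: d => // n _; split.
  apply: generates_invariant_field_nf_sqrt => x _ _ j.
  by exists (sqrtc (nf_sq (genv x) j)); rewrite sqr_sqrtc.
split.
  apply: generates_invariant_field_nf_sqrt => x skx gx j.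
  by exists (Num.sqrt (nf_sq (genv x) j)); rewrite sqr_sqrtr // ltW // nf_sq_gt0.
by split; exact: separates_orbits_krylov.
Qed.
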